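(* Let $\mathbf{M}^2$ be a connected smooth oriented surface and $\alpha:\mathbf{M}^2\to\mathbf{R}^4$ a smooth immersion. Suppose $\nu$ is a unit normal vector field along $\alpha$ such that $II_\nu=\langle d^2\alpha,\nu\rangle=\lambda I$ for a nonzero constant $\lambda$, and that the Gaussian curvature satisfies $K(p)\neq\lambda^2$ for all $p\in\mathbf{M}^2$. Then $\alpha$ is hyperspherical (its image lies in a hypersphere of radius $1/|\lambda|$).
   Context: In a chart $(u,v)$, $E=\langle\alpha_u,\alpha_u\rangle$, $F=\langle\alpha_u,\alpha_v\rangle$, $G=\langle\alpha_v,\alpha_v\rangle$, $I=E\,du^2+2F\,du\,dv+G\,dv^2$. For a unit normal field $\nu$, $II_\nu=e_\nu du^2+2f_\nu du\,dv+g_\nu dv^2$ with $e_\nu=\langle\alpha_{uu},\nu\rangle$, $f_\nu=\langle\alpha_{uv},\nu\rangle$, $g_\nu=\langle\alpha_{vv},\nu\rangle$. For an orthonormal normal frame $\{\nu_1,\nu_2\}$ with coefficients $e_i,f_i,g_i$ of $II_{\nu_i}$, the Gaussian curvature is $K=\frac{e_1g_1-f_1^2+e_2g_2-f_2^2}{EG-F^2}$. An immersion is hyperspherical if its image is contained in a hypersphere (round $3$-sphere) of $\mathbf{R}^4$. *)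

From HB Require Import structures.
From mathcomp Require Import all_boot all_order all_algebra.
From mathcomp Require Import all_classical all_reals all_analysis.
Set Implicit Arguments. Unset Strict Implicit. Unset Printing Implicit Defensive.
Import Order.TTheory GRing.Theory Num.Theory.
Import numFieldNormedType.Exports.
Local Open Scope classical_set_scope.
Local Open Scope ring_scope.

Definition dot4 {R : realType} (a b : 'rV[R]_4) : R := \sum_(k < 4) a 0 k * b 0 k.

Definition pu {R : realType} (f : R * R -> R) : R * R -> R :=
  fun x => derive1 (fun t => f (t, x.2)) x.1.
Definition pv {R : realType} (f : R * R -> R) : R * R -> R :=
  fun x => derive1 (fun t => f (x.1, t)) x.2.

Fixpoint pd {R : realType} (ds : seq bool) (f : R * R -> R) : R * R -> R :=
  match ds with
  | [::] => f
  | d :: ds' => (if d then pv else pu) (pd ds' f)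
  end.

Definition smooth_on {R : realType} (W : set (R * R)) (f : R * R -> R) : Prop :=
  forall (ds : seq bool) (x : R * R), W x ->
    [/\ derivable (fun t => pd ds f (t, x.2)) x.1 1,
        derivable (fun t => pd ds f (x.1, t)) x.2 1 &
        {for x, continuous (pd ds f)}].

Definition vpu {R : realType} (a : R * R -> 'rV[R]_4) : R * R -> 'rV[R]_4 :=
  fun x => \row_k pu (fun y => a y 0 k) x.
Definition vpv {R : realType} (a : R * R -> 'rV[R]_4) : R * R -> 'rV[R]_4 :=
  fun x => \row_k pv (fun y => a y 0 k) x.

Definition oriented_smooth_atlas {R : realType} (M : topologicalType) (I : Type)
    (U : I -> set (R * R)) (phi : I -> R * R -> M) : Prop :=
  [/\ forall i, open (U i),
      (forall i x y, U i x -> U i y -> phi i x = phi i y -> x = y),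
      (forall i, {within U i, continuous (phi i)}) /\
      (forall i (V : set (R * R)), open V -> V `<=` U i -> open (phi i @` V)),
      forall p : M, exists i x, U i x /\ phi i x = p &
      forall i j, exists psi : R * R -> R * R,
        let W := U i `&` (phi i @^-1` (phi j @` U j)) in
        [/\ forall x, W x -> U j (psi x) /\ phi j (psi x) = phi i x,
            smooth_on W (fun y => (psi y).1),
            smooth_on W (fun y => (psi y).2) &
            forall x, W x ->
              0 < pu (fun y => (psi y).1) x * pv (fun y => (psi y).2) x
                  - pv (fun y => (psi y).1) x * pu (fun y => (psi y).2) x]].

Definition smooth_map {R : realType} {M : topologicalType} {I : Type}
    (U : I -> set (R * R)) (phi : I -> R * R -> M) (F : M -> 'rV[R]_4) : Prop :=
  forall i (k : 'I_4), smooth_on (U i) (fun x => F (phi i x) 0 k).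

Definition immersion {R : realType} {M : topologicalType} {I : Type}
    (U : I -> set (R * R)) (phi : I -> R * R -> M) (alpha : M -> 'rV[R]_4) : Prop :=
  smooth_map U phi alpha /\
  forall i x (a b : R), U i x ->
    a *: vpu (alpha \o phi i) x + b *: vpv (alpha \o phi i) x = 0 -> a = 0 /\ b = 0.

Definition ffE {R : realType} (a : R * R -> 'rV[R]_4) x := dot4 (vpu a x) (vpu a x).
Definition ffF {R : realType} (a : R * R -> 'rV[R]_4) x := dot4 (vpu a x) (vpv a x).
Definition ffG {R : realType} (a : R * R -> 'rV[R]_4) x := dot4 (vpv a x) (vpv a x).

Definition sfe {R : realType} (a : R * R -> 'rV[R]_4) (n : 'rV[R]_4) x :=
  dot4 (vpu (vpu a) x) n.
Definition sff {R : realType} (a : R * R -> 'rV[R]_4) (n : 'rV[R]_4) x :=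
  dot4 (vpv (vpu a) x) n.
Definition sfg {R : realType} (a : R * R -> 'rV[R]_4) (n : 'rV[R]_4) x :=
  dot4 (vpv (vpv a) x) n.

(* Gaussian curvature at x computed with an orthonormal normal frame {n1,n2} *)
Definition gaussK {R : realType} (a : R * R -> 'rV[R]_4) (n1 n2 : 'rV[R]_4) x : R :=
  (sfe a n1 x * sfg a n1 x - sff a n1 x ^+ 2 + sfe a n2 x * sfg a n2 x - sff a n2 x ^+ 2)
  / (ffE a x * ffG a x - ffF a x ^+ 2).

Definition unit_normal_at {R : realType} (a : R * R -> 'rV[R]_4) (n : 'rV[R]_4) x : Prop :=
  dot4 n n = 1 /\ dot4 n (vpu a x) = 0 /\ dot4 n (vpv a x) = 0.

From HB Require Import structures.
From mathcomp Require Import all_boot all_order all_algebra.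
From mathcomp Require Import all_classical all_reals all_analysis.
From mathcomp Require Import ring lra.
Import Order.TTheory GRing.Theory Num.Theory.
Import numFieldNormedType.Exports.
Local Open Scope classical_set_scope.
Local Open Scope ring_scope.

Set Implicit Arguments. Unset Strict Implicit. Unset Printing Implicit Defensive.

(* In a chart, let a be the parametrization, n the normal field, and
   P = n_u + lam a_u, Q = n_v + lam a_v the partial derivatives of n + lam a.
   Differentiating |n| = 1, <n, a_u> = 0, <n, a_v> = 0 and using II_n = lam I
   shows that P and Q are orthogonal to a_u, a_v and n, so both lie on the
   normal line orthogonal to n.  Differentiating <P, a_u> = 0, ... once more and
   using P_v = Q_u (symmetry of mixed partials) gives the Codazzi relations
   <P, a_uv> = <Q, a_uu> and <P, a_vv> = <Q, a_uv>.  If P or Q were nonzero,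
   the unit normal Z along that line would then satisfy e_Z g_Z = f_Z^2, and the
   Gauss formula in the normal frame (n, Z) would give K = lam^2.  Hence
   nu + lam alpha is locally constant, so constant, equal to lam c say, on the
   connected surface, and |alpha - c| = |nu| / |lam| = 1 / |lam|. *)

Section Derive1.
Variable R : realType.
Implicit Types (f g : R -> R) (a b c t : R).

Lemma derivable1_mull c f t : derivable f t 1 -> derivable (fun s => c * f s) t 1.
Proof. by move=> df; apply: derivableM => //; exact: derivable_cst. Qed.

Lemma derivable1D f g t : derivable f t 1 -> derivable g t 1 ->
  derivable (fun s => f s + g s) t 1.
Proof. by move=> df dg; apply: derivableD. Qed.

Lemma derive1D f g t : derivable f t 1 -> derivable g t 1 ->
  derive1 (fun s => f s + g s) t = derive1 f t + derive1 g t.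
Proof. by move=> df dg; rewrite !derive1E; apply: deriveD. Qed.

Lemma derive1B f g t : derivable f t 1 -> derivable g t 1 ->
  derive1 (fun s => f s - g s) t = derive1 f t - derive1 g t.
Proof. by move=> df dg; rewrite !derive1E; apply: deriveB. Qed.

Lemma derive1M f g t : derivable f t 1 -> derivable g t 1 ->
  derive1 (fun s => f s * g s) t = f t * derive1 g t + g t * derive1 f t.
Proof. by move=> df dg; rewrite !derive1E; apply: deriveM. Qed.

Lemma derivable_MVT g a b : a < b -> (forall s, a <= s <= b -> derivable g s 1) ->
  exists2 c, a < c < b & g b - g a = derive1 g c * (b - a).
Proof.
move=> ab dg.
have dg' s : s \in `]a, b[ -> is_derive s 1 g (derive1 g s).
  rewrite in_itv /= => /andP[a_s sb].
  by rewrite derive1E; apply/derivableP/dg; rewrite !ltW.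
have cg : {within `[a, b], continuous g}.
  by apply: derivable_within_continuous => s; rewrite in_itv /=; exact: dg.
have [c] := MVT ab dg' cg.
by rewrite in_itv /=; exists c.
Qed.

Lemma derive1_eq0_ball_const g c e a b :
  (forall s, ball c e s -> derivable g s 1 /\ derive1 g s = 0) ->
  ball c e a -> ball c e b -> g a = g b.
Proof.
wlog ab : a b / a <= b.
  by move=> W H Ba Bb; case: (leP a b) => [|/ltW] ab; [|symmetry]; exact: W.
move=> H; rewrite !ball_itv /= !in_itv /= => /andP[ca ac] /andP[cb bc].
have [<-//|ab'] := eqVneq a b.
have in_ball s : a <= s <= b -> ball c e s.
  by case/andP=> sa sb; rewrite ball_itv /= in_itv /=; apply/andP; split; lra.
have ab2 : a < b by rewrite lt_neqAle ab' ab.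
have [s /andP[a_s sb] E] :=
  derivable_MVT ab2 (fun s hs => (H s (in_ball s hs)).1).
have sab : a <= s <= b by rewrite !ltW.
by move: E; rewrite (H s (in_ball s sab)).2 mul0r => /eqP; rewrite subr_eq0 => /eqP.
Qed.

End Derive1.

Section Dot4.
Variable R : realType.
Implicit Types (u v w : 'rV[R]_4).

Lemma dot4C u v : dot4 u v = dot4 v u.
Proof. by apply: eq_bigr => k _; rewrite mulrC. Qed.

Lemma dot4Dl u v w : dot4 (u + v) w = dot4 u w + dot4 v w.
Proof. by rewrite /dot4 -big_split; apply: eq_bigr => k _; rewrite !mxE mulrDl. Qed.

Lemma dot4Zl (c : R) u v : dot4 (c *: u) v = c * dot4 u v.
Proof. by rewrite /dot4 mulr_sumr; apply: eq_bigr => k _; rewrite !mxE mulrA. Qed.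

Lemma dot4Bl u v w : dot4 (u - v) w = dot4 u w - dot4 v w.
Proof. by rewrite dot4Dl -scaleN1r dot4Zl mulN1r. Qed.

Lemma dot4Zr (c : R) u v : dot4 v (c *: u) = c * dot4 v u.
Proof. by rewrite dot4C dot4Zl dot4C. Qed.

Lemma dot4Br u v w : dot4 w (u - v) = dot4 w u - dot4 w v.
Proof. by rewrite dot4C dot4Bl !(dot4C w). Qed.

Lemma dot40l v : dot4 0 v = 0.
Proof. by rewrite -(scale0r 0) dot4Zl mul0r. Qed.

Lemma dot4_ge0 v : 0 <= dot4 v v.
Proof. by apply: sumr_ge0 => k _; rewrite -expr2 sqr_ge0. Qed.

Lemma dot4_eq0 v : (dot4 v v == 0) = (v == 0).
Proof.
apply/idP/eqP => [|->]; last by rewrite dot40l.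
rewrite /dot4 psumr_eq0 => [/allP v0|k _]; last by rewrite -expr2 sqr_ge0.
apply/rowP => k; rewrite mxE.
by have := v0 k (mem_index_enum k); rewrite /= mulf_eq0 orbb => /eqP.
Qed.

Lemma dot4_gt0 v : v != 0 -> 0 < dot4 v v.
Proof. by rewrite lt0r dot4_eq0 dot4_ge0 andbT. Qed.

End Dot4.

Section NormalSpace.
Variable R : realType.
Implicit Types (au av n P Q Y Z : 'rV[R]_4).

Definition lin_indep2 (u v : 'rV[R]_4) :=
  forall c1 c2 : R, c1 *: u + c2 *: v = 0 -> c1 = 0 /\ c2 = 0.

Definition orthogonal3 (u v w Y : 'rV[R]_4) :=
  [/\ dot4 Y u = 0, dot4 Y v = 0 & dot4 Y w = 0].

Lemma orthogonal4_eq0 (V : 'I_4 -> 'rV[R]_4) r :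
  (forall i j, i != j -> dot4 (V i) (V j) = 0) -> (forall i, V i != 0) ->
  (forall i, dot4 r (V i) = 0) -> r = 0.
Proof.
move=> Vo Vn rV.
pose M : 'M[R]_4 := \matrix_(i, j) V i 0 j.
pose N : 'M[R]_4 := \matrix_(i, j) (V i 0 j / dot4 (V i) (V i)).
have NM : N *m M^T = 1%:M.
  apply/matrixP => i j; rewrite !mxE.
  under eq_bigr do rewrite !mxE.
  have -> : \sum_(k < 4) V i 0 k / dot4 (V i) (V i) * V j 0 k =
            dot4 (V i) (V j) / dot4 (V i) (V i).
    by rewrite /dot4 mulr_suml; apply: eq_bigr => k _; ring.
  have [<-|ij] := eqVneq i j; first by rewrite divff // dot4_eq0.
  by rewrite Vo // mul0r.
have Mr : M *m r^T = 0.
  apply/matrixP => i j; rewrite !mxE (ord1 j) -[RHS](rV i) dot4C.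
  by apply: eq_bigr => k _; rewrite !mxE.
have MN : M *m N^T = 1%:M by rewrite -(trmxK M) -trmx_mul NM trmx1.
have : r^T = 0 by rewrite -[r^T]mul1mx -(mulmx1C MN) -mulmxA Mr mulmx0.
by move/(congr1 trmx); rewrite trmxK trmx0.
Qed.

Lemma gram_det_neq0 au av : lin_indep2 au av ->
  dot4 au au != 0 /\ dot4 au au * dot4 av av - dot4 au av ^+ 2 != 0.
Proof.
move=> ind; set E := dot4 au au; set F := dot4 au av; set G := dot4 av av.
have E0 : E != 0.
  rewrite /E dot4_eq0; apply/eqP => au0.
  move: (ind 1 0); rewrite au0 scaler0 scale0r addr0 => /(_ erefl) [/eqP].
  by rewrite oner_eq0.
split=> //; apply/eqP => D.
have : dot4 (E *: av - F *: au) (E *: av - F *: au) = E * (E * G - F ^+ 2).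
  rewrite !dot4Bl !dot4Br !dot4Zl !dot4Zr (dot4C av au) -/E -/F -/G; ring.
rewrite D mulr0 => /eqP; rewrite dot4_eq0 => /eqP w0.
move: (ind (- F) E); rewrite scaleNr addrC w0 => /(_ erefl) [_ /eqP].
by rewrite (negbTE E0).
Qed.

(* [au], [E av - F au], [n] and [Z] form an orthogonal basis of R^4. *)
Lemma orthogonal3_line au av n Z Y : lin_indep2 au av -> n != 0 ->
  dot4 n au = 0 -> dot4 n av = 0 -> Z != 0 -> orthogonal3 au av n Z ->
  orthogonal3 au av n Y -> Y = (dot4 Y Z / dot4 Z Z) *: Z.
Proof.
move=> ind n0 nau nav Z0 [Zau Zav Zn] [Yau Yav Yn].
have [E0 _] := gram_det_neq0 ind.
set E := dot4 au au; set F := dot4 au av; set w := E *: av - F *: au.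
have w0 : w != 0.
  apply/eqP => w0; move: (ind (- F) E); rewrite scaleNr addrC.
  by move=> /(_ w0) [_ /eqP]; rewrite (negbTE E0).
have wau : dot4 w au = 0 by rewrite /w dot4Bl !dot4Zl (dot4C av) -/E -/F mulrC subrr.
have wn : dot4 w n = 0 by rewrite /w dot4Bl !dot4Zl -!(dot4C n) nau nav !mulr0 subrr.
have wZ : dot4 w Z = 0 by rewrite /w dot4Bl !dot4Zl -!(dot4C Z) Zau Zav !mulr0 subrr.
have wY : dot4 Y w = 0 by rewrite /w dot4Br !dot4Zr Yau Yav !mulr0 subrr.
pose V (i : 'I_4) := match val i with 0 => au | 1 => w | 2 => n | _ => Z end.
apply/eqP; rewrite -subr_eq0; apply/eqP; apply: (@orthogonal4_eq0 V).
- move=> [[|[|[|[|i]]]] Hi] [[|[|[|[|j]]]] Hj] //= _;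
    by first [done | rewrite dot4C].
- by move=> [[|[|[|[|i]]]] Hi] //=; first [done | rewrite -dot4_eq0].
move=> [[|[|[|[|i]]]] Hi] //=; rewrite dot4Bl dot4Zl.
- by rewrite Yau Zau mulr0 subrr.
- by rewrite wY (dot4C Z) wZ mulr0 subrr.
- by rewrite Yn Zn mulr0 subrr.
- by rewrite mulfVK ?subrr // dot4_eq0.
Qed.

Lemma orthogonal3_codazzi_eq0 au av n P Q (auu auv avv : 'rV[R]_4) :
  lin_indep2 au av -> n != 0 -> dot4 n au = 0 -> dot4 n av = 0 ->
  orthogonal3 au av n P -> orthogonal3 au av n Q ->
  dot4 P auv = dot4 Q auu -> dot4 P avv = dot4 Q auv ->
  (forall Z, Z != 0 -> orthogonal3 au av n Z ->
     dot4 auu Z * dot4 avv Z != dot4 auv Z ^+ 2) ->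
  P = 0 /\ Q = 0.
Proof.
move=> ind n0 nau nav oP oQ R1 R2 nondeg.
(* For [P != 0], [Q = q P] and the relations read f_P = q e_P, g_P = q f_P. *)
have [P0|P0] := eqVneq P 0.
  split=> //; apply/eqP/negP => /negP Q0; apply/negP: (nondeg Q Q0 oQ).
  by rewrite ![dot4 _ Q]dot4C -R1 -R2 P0 !dot40l mul0r expr2 mul0r negbK.
exfalso; apply/negP: (nondeg P P0 oP).
rewrite (orthogonal3_line ind n0 nau nav P0 oP oQ) !dot4Zl in R1 R2.
by rewrite !(dot4C _ P) R2 R1 negbK; apply/eqP; ring.
Qed.

End NormalSpace.

Lemma eq_approx_common (R : realFieldType) (a b : R) :
  (forall e, 0 < e -> exists x, `|a - x| < e /\ `|b - x| < e) -> a = b.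
Proof.
move=> H; apply/eqP; apply/negPn/negP => ab.
have e0 : 0 < `|a - b| / 2 by rewrite divr_gt0 // normr_gt0 subr_eq0.
have [x [ax bx]] := H _ e0.
have := ler_distD x a b; rewrite (distrC x b); lra.
Qed.

Section PartialDerivatives.
Variable R : realType.
Implicit Types (U : set (R * R)) (f g : R * R -> R).

Lemma pu_eq0_const U g c y : open U -> (forall z, U z -> g z = c) -> U y -> pu g y = 0.
Proof.
move=> oU gc Uy; have /nbhs_ballP[e e0 sub] : nbhs y U by apply: open_nbhs_nbhs.
rewrite /pu derive1E -(derive_cst c y.1 1); apply: near_eq_derive.
apply/nbhs_ballP; exists e => // s ys; apply: gc; apply: sub; split=> //; exact: ballxx.
Qed.

Lemma pv_eq0_const U g c y : open U -> (forall z, U z -> g z = c) -> U y -> pv g y = 0.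
Proof.
move=> oU gc Uy; have /nbhs_ballP[e e0 sub] : nbhs y U by apply: open_nbhs_nbhs.
rewrite /pv derive1E -(derive_cst c y.2 1); apply: near_eq_derive.
apply/nbhs_ballP; exists e => // t yt; apply: gc; apply: sub; split=> //; exact: ballxx.
Qed.

Lemma partials_eq0_ball_const g x e :
  (forall z, ball x e z -> [/\ derivable (fun s => g (s, z.2)) z.1 1, pu g z = 0,
                              derivable (fun t => g (z.1, t)) z.2 1 & pv g z = 0]) ->
  forall y, ball x e y -> g y = g x.
Proof.
case: x => x1 x2 H [y1 y2] [/= xy1 xy2].
have x22 : ball x2 e x2 by apply: ballxx; apply: le_lt_trans xy2.
have x11 : ball x1 e x1 by apply: ballxx; apply: le_lt_trans xy1.
transitivity (g (y1, x2)).
  apply: (@derive1_eq0_ball_const _ (fun t => g (y1, t)) x2 e) => // t xt.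
  by have [_ _ ? ?] := H (y1, t) (conj xy1 xt).
apply: (@derive1_eq0_ball_const _ (fun s => g (s, x2)) x1 e) => // s xs.
by have [? ? _ _] := H (s, x2) (conj xs x22).
Qed.

Lemma second_difference_MVT f a b h : 0 < h ->
  (forall s t, a <= s <= a + h -> b <= t <= b + h ->
     derivable (fun r => f (r, t)) s 1 /\ derivable (fun r => pu f (s, r)) t 1) ->
  exists c d, [/\ a < c < a + h, b < d < b + h &
    f (a + h, b + h) - f (a + h, b) - f (a, b + h) + f (a, b) = pv (pu f) (c, d) * h ^+ 2].
Proof.
move=> h0 df.
have ah : a < a + h by rewrite ltrDl.
have bh : b < b + h by rewrite ltrDl.
have lo : b <= b <= b + h by rewrite lexx ltW.
have hi : b <= b + h <= b + h by rewrite lexx ltW.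
have [c /andP[ac ch] Ec] := @derivable_MVT _ (fun s => f (s, b + h) - f (s, b)) a (a + h) ah
  (fun s hs => derivableB (df s _ hs hi).1 (df s _ hs lo).1).
have cab : a <= c <= a + h by rewrite !ltW.
have [d /andP[bd dh] Ed] := @derivable_MVT _ (fun t => pu f (c, t)) b (b + h) bh
  (fun t ht => (df c t cab ht).2).
rewrite derive1B in Ec; [|exact: (df c _ cab hi).1|exact: (df c _ cab lo).1].
have hh s : s + h - s = h by rewrite addrC addKr.
rewrite -/(pu f (c, b + h)) -/(pu f (c, b)) Ed !hh in Ec.
exists c, d; split; [by rewrite ac ch|by rewrite bd dh|].
have -> : pv (pu f) (c, d) * h ^+ 2 = derive1 (fun t => pu f (c, t)) d * h * h.
  by rewrite expr2 mulrA.
by rewrite -Ec; ring.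
Qed.

Lemma mixed_partials_meet U f (x : R * R) (h : R) : smooth_on U f -> 0 < h ->
  (forall s t, x.1 <= s <= x.1 + h -> x.2 <= t <= x.2 + h -> U (s, t)) ->
  exists p q : R * R, [/\ x.1 < p.1 < x.1 + h, x.2 < p.2 < x.2 + h,
    x.1 < q.1 < x.1 + h, x.2 < q.2 < x.2 + h & pv (pu f) p = pu (pv f) q].
Proof.
move=> sf h0 inU.
have dfu s t : x.1 <= s <= x.1 + h -> x.2 <= t <= x.2 + h ->
    derivable (fun q => f (q, t)) s 1 /\ derivable (fun q => pu f (s, q)) t 1.
  move=> hs ht; have [d1 _ _] := sf [::] _ (inU s t hs ht).
  by have [_ d2 _] := sf [:: false] _ (inU s t hs ht).
have dfv s t : x.2 <= s <= x.2 + h -> x.1 <= t <= x.1 + h ->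
    derivable (fun q => f (t, q)) s 1 /\ derivable (fun q => pv f (q, s)) t 1.
  move=> hs ht; have [_ d1 _] := sf [::] _ (inU t s ht hs).
  by have [d2 _ _] := sf [:: true] _ (inU t s ht hs).
have [c [c' [hc hc' Ec]]] := @second_difference_MVT f x.1 x.2 h h0 dfu.
(* The same second difference, expanded with the roles of u and v exchanged. *)
have [d' [d [hd' hd Ed]]] :=
  @second_difference_MVT (fun z => f (z.2, z.1)) x.2 x.1 h h0 dfv.
have {}Ed : f (x.1 + h, x.2 + h) - f (x.1, x.2 + h) - f (x.1 + h, x.2) + f (x.1, x.2)
    = pu (pv f) (d, d') * h ^+ 2 := Ed.
exists (c, c'), (d, d'); split => //.
have h2 : h ^+ 2 != 0 by rewrite expf_neq0 // lt0r_neq0.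
by apply: (mulIf h2); rewrite -Ec -Ed; congr (_ + _); exact: addrAC.
Qed.

Lemma pvpu_sym U f x : open U -> smooth_on U f -> U x -> pv (pu f) x = pu (pv f) x.
Proof.
move=> oU sf Ux; apply: eq_approx_common => e e0.
have nU : \forall y \near x, U y by apply: open_nbhs_nbhs.
have nA : \forall y \near x, `|pv (pu f) x - pv (pu f) y| < e.
  have [_ _ cA] := sf [:: true; false] x Ux.
  exact: (@cvgr_dist_lt _ _ _ _ _ (pd [:: true; false] f) _ cA _ e0).
have nB : \forall y \near x, `|pu (pv f) x - pu (pv f) y| < e.
  have [_ _ cB] := sf [:: false; true] x Ux.
  exact: (@cvgr_dist_lt _ _ _ _ _ (pd [:: false; true] f) _ cB _ e0).
have : \forall y \near x, [/\ U y, `|pv (pu f) x - pv (pu f) y| < e &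
                                   `|pu (pv f) x - pu (pv f) y| < e].
  by apply: (filterS3 _ _ nU nA nB) => y Uy Ay By; split.
case/nbhs_ballP => r /= r0 near_r.
have [h h0 hr] : exists2 h : R, 0 < h & h < r by exists (r / 2); lra.
have sq s t : x.1 <= s <= x.1 + h -> x.2 <= t <= x.2 + h -> ball x r (s, t).
  move=> /andP[? ?] /andP[? ?].
  by split; rewrite /= ball_itv /= in_itv /=; apply/andP; split; lra.
have inU s t : x.1 <= s <= x.1 + h -> x.2 <= t <= x.2 + h -> U (s, t).
  by move=> hs ht; have [] := near_r _ (sq s t hs ht).
have [p [q [p1 p2 q1 q2 pq]]] := mixed_partials_meet sf h0 inU.
have inside z : x.1 < z.1 < x.1 + h -> x.2 < z.2 < x.2 + h -> ball x r z.
  by case: z => u w /andP[? ?] /andP[? ?]; apply: sq; rewrite !ltW.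
have [_ nAp _] := near_r p (inside p p1 p2).
have [_ _ nBq] := near_r q (inside q q1 q2).
by exists (pv (pu f) p); split; [exact: nAp | rewrite pq; exact: nBq].
Qed.

End PartialDerivatives.

Section VectorPartials.
Variable R : realType.
Implicit Types (U : set (R * R)) (g : R * R -> R) (F G : R * R -> 'rV[R]_4) (y : R * R).

Lemma pd_pu ds g : pd ds (pu g) = pd (rcons ds false) g.
Proof. by elim: ds => //= d ds ->. Qed.

Lemma pd_pv ds g : pd ds (pv g) = pd (rcons ds true) g.
Proof. by elim: ds => //= d ds ->. Qed.

Lemma smooth_on_pu U g : smooth_on U g -> smooth_on U (pu g).
Proof. by move=> sg ds; rewrite pd_pu; exact: sg. Qed.

Lemma smooth_on_pv U g : smooth_on U g -> smooth_on U (pv g).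
Proof. by move=> sg ds; rewrite pd_pv; exact: sg. Qed.

Definition smooth_vec U F := forall k, smooth_on U (fun z => F z 0 k).

Lemma smooth_vec_vpu U F : smooth_vec U F -> smooth_vec U (vpu F).
Proof.
move=> sF k; have -> : (fun z => vpu F z 0 k) = pu (fun z => F z 0 k).
  by apply/funext => z; rewrite mxE.
exact: smooth_on_pu.
Qed.

Lemma smooth_vec_vpv U F : smooth_vec U F -> smooth_vec U (vpv F).
Proof.
move=> sF k; have -> : (fun z => vpv F z 0 k) = pv (fun z => F z 0 k).
  by apply/funext => z; rewrite mxE.
exact: smooth_on_pv.
Qed.

Definition partially_derivable F y := forall k,
  derivable (fun s => F (s, y.2) 0 k) y.1 1 /\ derivable (fun t => F (y.1, t) 0 k) y.2 1.

Lemma smooth_vec_derivable U F y : smooth_vec U F -> U y -> partially_derivable F y.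
Proof. by move=> sF Uy k; have [] := sF k [::] y Uy. Qed.

Lemma partially_derivableDZ F G (c : R) y : partially_derivable F y ->
  partially_derivable G y -> partially_derivable (fun z => F z + c *: G z) y.
Proof.
move=> dF dG k; have [F1 F2] := dF k; have [G1 G2] := dG k.
split.
- have -> : (fun s => (F (s, y.2) + c *: G (s, y.2)) 0 k) =
            (fun s => F (s, y.2) 0 k + c * G (s, y.2) 0 k) by apply/funext => s; rewrite !mxE.
  exact: derivable1D F1 (derivable1_mull (c := c) G1).
- have -> : (fun t => (F (y.1, t) + c *: G (y.1, t)) 0 k) =
            (fun t => F (y.1, t) 0 k + c * G (y.1, t) 0 k) by apply/funext => t; rewrite !mxE.
  exact: derivable1D F2 (derivable1_mull (c := c) G2).
Qed.

Lemma vpuDZ F G (c : R) y : partially_derivable F y -> partially_derivable G y ->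
  vpu (fun z => F z + c *: G z) y = vpu F y + c *: vpu G y.
Proof.
move=> dF dG; apply/rowP => k; rewrite !mxE /pu.
under eq_fun do rewrite !mxE.
by rewrite derive1D ?derive1Ml //; [exact: (dG k).1|exact: (dF k).1|exact/derivable1_mull/(dG k).1].
Qed.

Lemma vpvDZ F G (c : R) y : partially_derivable F y -> partially_derivable G y ->
  vpv (fun z => F z + c *: G z) y = vpv F y + c *: vpv G y.
Proof.
move=> dF dG; apply/rowP => k; rewrite !mxE /pv.
under eq_fun do rewrite !mxE.
by rewrite derive1D ?derive1Ml //; [exact: (dG k).2|exact: (dF k).2|exact/derivable1_mull/(dG k).2].
Qed.

Lemma derive1_dot4 (A B : R -> 'rV[R]_4) t :
  (forall k, derivable (fun s => A s 0 k) t 1) -> (forall k, derivable (fun s => B s 0 k) t 1) ->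
  derive1 (fun s => dot4 (A s) (B s)) t =
    dot4 (\row_k derive1 (fun s => A s 0 k) t) (B t) +
    dot4 (A t) (\row_k derive1 (fun s => B s 0 k) t).
Proof.
move=> dA dB.
have -> : (fun s => dot4 (A s) (B s)) = \sum_(k < 4) (fun s => A s 0 k * B s 0 k).
  by rewrite fct_sumE.
rewrite derive1E derive_sum => [|k]; last exact: derivableM.
rewrite /dot4 -big_split; apply: eq_bigr => k _.
by rewrite -derive1E derive1M // !mxE addrC mulrC.
Qed.

Lemma pu_dot4 F G y : partially_derivable F y -> partially_derivable G y ->
  pu (fun z => dot4 (F z) (G z)) y = dot4 (vpu F y) (G y) + dot4 (F y) (vpu G y).
Proof. by case: y => y1 y2 dF dG; apply: derive1_dot4 => k; [exact: (dF k).1|exact: (dG k).1]. Qed.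

Lemma pv_dot4 F G y : partially_derivable F y -> partially_derivable G y ->
  pv (fun z => dot4 (F z) (G z)) y = dot4 (vpv F y) (G y) + dot4 (F y) (vpv G y).
Proof. by case: y => y1 y2 dF dG; apply: derive1_dot4 => k; [exact: (dF k).2|exact: (dG k).2]. Qed.

Lemma vpvu_sym U F y : open U -> smooth_vec U F -> U y -> vpv (vpu F) y = vpu (vpv F) y.
Proof.
move=> oU sF Uy; apply/rowP => k; rewrite [LHS]mxE [RHS]mxE.
have -> : (fun w => vpu F w 0 k) = pu (fun w => F w 0 k) by apply/funext => w; rewrite mxE.
have -> : (fun w => vpv F w 0 k) = pv (fun w => F w 0 k) by apply/funext => w; rewrite mxE.
exact: pvpu_sym oU (sF k) Uy.
Qed.

End VectorPartials.

Lemma gauss_equation_flat (K : fieldType) (lam c E F G e f g : K) :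
  E * G - F ^+ 2 != 0 -> e * g = f ^+ 2 ->
  (lam * E * (lam * G) - (lam * F) ^+ 2 + c * e * (c * g) - (c * f) ^+ 2) / (E * G - F ^+ 2)
    = lam ^+ 2.
Proof.
move=> D0 flat; rewrite [X in X / _](_ : _ = lam ^+ 2 * (E * G - F ^+ 2) + c ^+ 2 * (e * g - f ^+ 2)).
  by rewrite flat subrr mulr0 addr0 mulfK.
by ring.
Qed.

Lemma gaussK_flat_normal (R : realType) (a : R * R -> 'rV[R]_4) (nu Z : 'rV[R]_4) y
    (lam : R) : lin_indep2 (vpu a y) (vpv a y) ->
  [/\ sfe a nu y = lam * ffE a y, sff a nu y = lam * ffF a y & sfg a nu y = lam * ffG a y] ->
  Z != 0 -> orthogonal3 (vpu a y) (vpv a y) nu Z ->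
  dot4 (vpu (vpu a) y) Z * dot4 (vpv (vpv a) y) Z = dot4 (vpv (vpu a) y) Z ^+ 2 ->
  exists2 n2, unit_normal_at a n2 y /\ dot4 nu n2 = 0 & gaussK a nu n2 y = lam ^+ 2.
Proof.
move=> ind [IIe IIf IIg] Z0 [Zau Zav Zn] flat.
have [_ D0] := gram_det_neq0 ind.
have Z2 : 0 < dot4 Z Z := dot4_gt0 Z0.
have [s s0 ss] : exists2 s : R, s != 0 & s ^+ 2 = dot4 Z Z.
  exists (Num.sqrt (dot4 Z Z : R)); last exact: (sqr_sqrtr (ltW Z2)).
  by apply: lt0r_neq0; rewrite sqrtr_gt0.
exists (s^-1 *: Z).
  split; last by rewrite dot4Zr (dot4C nu) Zn mulr0.
  split; last by split; rewrite dot4Zl ?Zau ?Zav mulr0.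
  by rewrite dot4Zl dot4Zr mulrA -expr2 exprVn ss (mulVf (lt0r_neq0 Z2)).
have e2 : sfe a (s^-1 *: Z) y = s^-1 * dot4 (vpu (vpu a) y) Z := dot4Zr _ _ _.
have f2 : sff a (s^-1 *: Z) y = s^-1 * dot4 (vpv (vpu a) y) Z := dot4Zr _ _ _.
have g2 : sfg a (s^-1 *: Z) y = s^-1 * dot4 (vpv (vpv a) y) Z := dot4Zr _ _ _.
have {}D0 : ffE a y * ffG a y - ffF a y ^+ 2 != 0 := D0.
rewrite /gaussK IIe IIf IIg e2 f2 g2.
exact (gauss_equation_flat lam s^-1 D0 flat).
Qed.

(* [t] is one of the parameters u, v and [s] the other: [nt] is the [t]-derivative of the normal,
   [ut], [us] the tangent vectors and [utt], [uts] second derivatives of the parametrization. *)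
Lemma umbilic_weingarten_orthogonal (R : realType) (lam : R) (n nt ut us utt uts : 'rV[R]_4) :
  dot4 nt n + dot4 n nt = 0 -> dot4 nt ut + dot4 n utt = 0 -> dot4 nt us + dot4 n uts = 0 ->
  dot4 n ut = 0 ->
  dot4 utt n = lam * dot4 ut ut -> dot4 uts n = lam * dot4 ut us ->
  [/\ dot4 (nt + lam *: ut) ut = 0, dot4 (nt + lam *: ut) us = 0 & dot4 (nt + lam *: ut) n = 0].
Proof.
move=> dnn dnt dns nt0 IItt IIts.
rewrite !dot4Dl !dot4Zl (dot4C ut n) nt0.
rewrite (dot4C n) in dnn; rewrite (dot4C n) IItt in dnt; rewrite (dot4C n) IIts in dns.
by split; lra.
Qed.

Section UmbilicNormal.
Variables (R : realType) (U : set (R * R)) (a n : R * R -> 'rV[R]_4) (lam : R).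
Hypothesis oU : open U.
Hypothesis sa : smooth_vec U a.
Hypothesis sn : smooth_vec U n.
Hypothesis n_unit : forall y, U y -> unit_normal_at a (n y) y.
Hypothesis II_umbilic : forall y, U y ->
  [/\ sfe a (n y) y = lam * ffE a y, sff a (n y) y = lam * ffF a y &
      sfg a (n y) y = lam * ffG a y].

Let P y := vpu n y + lam *: vpu a y.
Let Q y := vpv n y + lam *: vpv a y.

Lemma umbilic_shape_orthogonal y : U y ->
  orthogonal3 (vpu a y) (vpv a y) (n y) (P y) /\ orthogonal3 (vpu a y) (vpv a y) (n y) (Q y).
Proof.
move=> Uy; have [_ [nau nav]] := n_unit Uy; have [IIe IIf IIg] := II_umbilic Uy.
have dn := smooth_vec_derivable sn Uy.
have dau := smooth_vec_derivable (smooth_vec_vpu sa) Uy.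
have dav := smooth_vec_derivable (smooth_vec_vpv sa) Uy.
have nn1 z : U z -> dot4 (n z) (n z) = 1 by move=> /n_unit[].
have nau0 z : U z -> dot4 (n z) (vpu a z) = 0 by move=> /n_unit[_ []].
have nav0 z : U z -> dot4 (n z) (vpv a z) = 0 by move=> /n_unit[_ []].
have := pu_eq0_const oU nn1 Uy; rewrite (pu_dot4 dn dn) => Nu.
have := pv_eq0_const oU nn1 Uy; rewrite (pv_dot4 dn dn) => Nv.
have := pu_eq0_const oU nau0 Uy; rewrite (pu_dot4 dn dau) => Auu.
have := pu_eq0_const oU nav0 Uy; rewrite (pu_dot4 dn dav) -(vpvu_sym oU sa Uy) => Auv.
have := pv_eq0_const oU nau0 Uy; rewrite (pv_dot4 dn dau) => Avu.
have := pv_eq0_const oU nav0 Uy; rewrite (pv_dot4 dn dav) => Avv.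
have IIf' : dot4 (vpv (vpu a) y) (n y) = lam * dot4 (vpv a y) (vpu a y).
  by rewrite (dot4C (vpv a y)); exact: IIf.
split.
- by have [] := umbilic_weingarten_orthogonal Nu Auu Auv nau IIe IIf.
- by have [] := umbilic_weingarten_orthogonal Nv Avv Avu nav IIg IIf'.
Qed.

Lemma umbilic_codazzi y : U y ->
  dot4 (P y) (vpv (vpu a) y) = dot4 (Q y) (vpu (vpu a) y) /\
  dot4 (P y) (vpv (vpv a) y) = dot4 (Q y) (vpv (vpu a) y).
Proof.
move=> Uy.
have dnu := smooth_vec_derivable (smooth_vec_vpu sn) Uy.
have dnv := smooth_vec_derivable (smooth_vec_vpv sn) Uy.
have dau := smooth_vec_derivable (smooth_vec_vpu sa) Uy.
have dav := smooth_vec_derivable (smooth_vec_vpv sa) Uy.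
have dP := partially_derivableDZ lam dnu dau.
have dQ := partially_derivableDZ lam dnv dav.
have Pau z : U z -> dot4 (P z) (vpu a z) = 0 by move=> /umbilic_shape_orthogonal[[]].
have Pav z : U z -> dot4 (P z) (vpv a z) = 0 by move=> /umbilic_shape_orthogonal[[]].
have Qau z : U z -> dot4 (Q z) (vpu a z) = 0 by move=> /umbilic_shape_orthogonal[_ []].
have Qav z : U z -> dot4 (Q z) (vpv a z) = 0 by move=> /umbilic_shape_orthogonal[_ []].
have := pv_eq0_const oU Pau Uy; rewrite (pv_dot4 dP dau) (vpvDZ _ dnu dau) => E1.
have := pu_eq0_const oU Qau Uy; rewrite (pu_dot4 dQ dau) (vpuDZ _ dnv dav) => E2.
have := pv_eq0_const oU Pav Uy; rewrite (pv_dot4 dP dav) (vpvDZ _ dnu dau) => E3.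
have := pu_eq0_const oU Qav Uy; rewrite (pu_dot4 dQ dav) (vpuDZ _ dnv dav) => E4.
rewrite -(vpvu_sym oU sn Uy) -(vpvu_sym oU sa Uy) in E2 E4.
by split; apply: addrI; [exact: etrans E1 (esym E2)|exact: etrans E3 (esym E4)].
Qed.

Lemma umbilic_derivative_eq0 y : U y -> lin_indep2 (vpu a y) (vpv a y) ->
  (forall n2, unit_normal_at a n2 y -> dot4 (n y) n2 = 0 -> gaussK a (n y) n2 y != lam ^+ 2) ->
  P y = 0 /\ Q y = 0.
Proof.
move=> Uy ind K.
have [nn [nau nav]] := n_unit Uy.
have n0 : n y != 0 by rewrite -dot4_eq0 nn oner_eq0.
have [oP oQ] := umbilic_shape_orthogonal Uy.
have [C1 C2] := umbilic_codazzi Uy.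
apply: (orthogonal3_codazzi_eq0 ind n0 nau nav oP oQ C1 C2) => Z Z0 oZ.
apply/eqP => flat.
have [n2 [n2u n2n] Kn2] := gaussK_flat_normal ind (II_umbilic Uy) Z0 oZ flat.
by move: (K n2 n2u n2n); rewrite Kn2 eqxx.
Qed.

End UmbilicNormal.

Lemma connected_locally_constant (M : topologicalType) (T : Type) (F : M -> T) :
  connected [set: M] -> (forall p, \forall q \near p, F q = F p) -> forall p q, F p = F q.
Proof.
move=> conM Floc p q.
pose S := [set r | F r = F p].
have oS : open S.
  by rewrite openE => r Sr; apply: filterS (Floc r) => r' Fr'; rewrite /S /= Fr'.
have oSc : open (~` S).
  by rewrite openE => r Sr; apply: filterS (Floc r) => r' Fr'; rewrite /setC /S /= Fr'.
have ST : S = [set: M].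
  apply: conM; first by exists p.
  - by exists S => //; rewrite setTI.
  - by exists S; [rewrite -openC | rewrite setTI].
by have : S q by rewrite ST.
Qed.

Lemma chart_partials_eq0_locally_constant (R : realType) (M : topologicalType) (I : Type)
    (U : I -> set (R * R)) (phi : I -> R * R -> M) (F : M -> 'rV[R]_4) :
  (forall i, open (U i)) -> (forall i V, open V -> V `<=` U i -> open (phi i @` V)) ->
  (forall p, exists i x, U i x /\ phi i x = p) ->
  (forall i x, U i x -> [/\ partially_derivable (F \o phi i) x,
                           vpu (F \o phi i) x = 0 & vpv (F \o phi i) x = 0]) ->
  forall p, \forall q \near p, F q = F p.
Proof.
move=> oU open_img cover dF0 p; have [i [x [Ux <-]]] := cover p.
have /nbhs_ballP[e /= e0 xeU] : nbhs x (U i) by apply: open_nbhs_nbhs.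
have nbhs_img : nbhs (phi i x) (phi i @` ball x e).
  apply: open_nbhs_nbhs; split; first exact: open_img (ball_open _ _) xeU.
  by exists x => //; exact: ballxx.
apply: filterS nbhs_img => _ [z xz <-]; apply/rowP => k.
apply: (@partials_eq0_ball_const _ (fun w => F (phi i w) 0 k) x e) => // w xw.
have [dF Fu Fv] := dF0 i w (xeU _ xw); have [du dv] := dF k.
split=> //.
- by move/rowP/(_ k): Fu; rewrite !mxE.
- by move/rowP/(_ k): Fv; rewrite !mxE.
Qed.

Unset Implicit Arguments.

Theorem theorem3p4 (R : realType) (M : topologicalType) (I : Type)
    (U : I -> set (R * R)) (phi : I -> R * R -> M)
    (alpha nu : M -> 'rV[R]_4) (lambda : R) :
  hausdorff_space M ->
  connected [set: M] ->
  oriented_smooth_atlas U phi ->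
  immersion U phi alpha ->
  smooth_map U phi nu ->
  (forall i x, U i x -> unit_normal_at (alpha \o phi i) (nu (phi i x)) x) ->
  lambda != 0 ->
  (forall i x, U i x ->
     [/\ sfe (alpha \o phi i) (nu (phi i x)) x = lambda * ffE (alpha \o phi i) x,
         sff (alpha \o phi i) (nu (phi i x)) x = lambda * ffF (alpha \o phi i) x &
         sfg (alpha \o phi i) (nu (phi i x)) x = lambda * ffG (alpha \o phi i) x]) ->
  (forall i x (n1 n2 : 'rV[R]_4), U i x ->
     unit_normal_at (alpha \o phi i) n1 x ->
     unit_normal_at (alpha \o phi i) n2 x ->
     dot4 n1 n2 = 0 ->
     gaussK (alpha \o phi i) n1 n2 x != lambda ^+ 2) ->
  exists c : 'rV[R]_4, forall p : M,
    dot4 (alpha p - c) (alpha p - c) = 1 / lambda ^+ 2.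
Proof.
move=> _ conM [oU _ [_ open_img] cover _] [sa ind] sn n_unit l0 II K.
pose F p := nu p + lambda *: alpha p.
have dF0 i x : U i x -> [/\ partially_derivable (F \o phi i) x,
                           vpu (F \o phi i) x = 0 & vpv (F \o phi i) x = 0].
  move=> Ux.
  have dn := smooth_vec_derivable (F := nu \o phi i) (sn i) Ux.
  have da := smooth_vec_derivable (F := alpha \o phi i) (sa i) Ux.
  have [P0 Q0] := umbilic_derivative_eq0 (oU i) (sa i) (sn i) (n_unit i) (II i) Ux
    (fun c1 c2 => ind i x c1 c2 Ux) (fun n2 => K i x _ n2 Ux (n_unit i x Ux)).
  split; first exact (partially_derivableDZ lambda dn da).
  - exact (etrans (vpuDZ lambda dn da) P0).
  - exact (etrans (vpvDZ lambda dn da) Q0).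
have F_const := connected_locally_constant conM
  (chart_partials_eq0_locally_constant oU open_img cover dF0).
case: (pselect (exists p : M, True)) => [[p0 _]|M0]; last first.
  by exists 0 => p; case: M0; exists p.
exists (lambda^-1 *: F p0) => p.
have [i [x [Ux <-]]] := cover p.
have [nn _] := n_unit i x Ux.
rewrite -(F_const (phi i x) p0) /F.
have -> : alpha (phi i x) - lambda^-1 *: (nu (phi i x) + lambda *: alpha (phi i x)) =
    - lambda^-1 *: nu (phi i x).
  by rewrite scalerDr scalerA mulVf // scale1r opprD addrCA subrr addr0 scaleNr.
by rewrite dot4Zl dot4Zr nn mulr1 mulrNN -expr2 exprVn div1r.
Qed.
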